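(* Let $\{\mathcal M_\omega\}_{\omega\in\Omega}$ be a family of $\mathcal L$-structures, $\mathbf M=\prod_{\omega\in\Omega}M_\omega$, and let $E$ be an integration functional on $\mathcal A=[0,1]^\Omega$. Let $(\widehat{\mathbf M},\widehat{\mathcal A})$ be the $\mathcal L^R$-structure associated to $(\mathbf M,\mathcal A)$ and $[\cdot]$ the canonical map. Then $(\mathbf M,\mathcal A)$ is full, and for every $\mathcal L$-formula $\varphi(\bar x)$ and every $\bar{\mathbf a}\in\mathbf M^n$: $\big[\langle\varphi(\bar{\mathbf a})\rangle\big]=[\![\varphi([\bar{\mathbf a}])]\!]$ (the right-hand side computed in $(\widehat{\mathbf M},\widehat{\mathcal A})$).
   Context: $\mathcal L$ is a (single-sorted) signature of continuous first-order logic. An integration functional on $\mathcal A=[0,1]^\Omega$ is $E\colon\mathcal A\to[0,1]$ with $E(1)=1$ and $E(X+Y)=E(X)+E(Y)$ whenever $X,Y,X+Y\in\mathcal A$. For $\bar{\mathbf a}\in\mathbf M^n$ and a formula $\varphi$, $\langle\varphi(\bar{\mathbf a})\rangle\in[0,1]^\Omega$ is $\omega\mapsto\varphi^{\mathcal M_\omega}(\bar{\mathbf a}(\omega))$. The randomisation signature $\mathcal L^R$ has a main sort carrying all function symbols of $\mathcal L$ (same continuity moduli), an auxiliary sort carrying $\{0,\neg,\tfrac12,\dotminus\}$, and for each predicate symbol $P$ of $\mathcal L$ a function symbol $[\![P]\!]$ from the main sort(s) to the auxiliary sort. $(\mathbf M,\mathcal A)$ is an $\mathcal L^R$-pre-structure: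 function symbols act pointwise on $\mathbf M$, $[\![P]\!](\bar{\mathbf a})=\langle P(\bar{\mathbf a})\rangle$, connectives act pointwise on $\mathcal A$ ($\neg X=1-X$, $\tfrac12X=X/2$, $X\dotminus Y=\max(X-Y,0)$), with pseudo-metrics $d(\mathbf a,\mathbf b)=E\langle d(\mathbf a,\mathbf b)\rangle$ and $d(X,Y)=E|X-Y|$. The associated structure $(\widehat{\mathbf M},\widehat{\mathcal A})$ is the completion of the quotient by distance zero; $[\cdot]$ is the canonical map, and $\widehat{\mathcal A}\cong L^1(\mathcal F,[0,1])$ for a probability space. $(\mathbf M,\mathcal A)$ is full if for all $\mathbf a,\mathbf b\in\mathbf M$, $X\in\mathcal A$ there is $\mathbf c\in\mathbf M$ with $\mathbf c(\omega)=\mathbf a(\omega)$ when $X(\omega)=1$ and $\mathbf c(\omega)=\mathbf b(\omega)$ when $X(\omega)=0$. In a structure with main sort $\mathbf N$ and auxiliary sort $L^1(\mathcal F,[0,1])$, $[\![\varphi]\!]$ is defined by induction: $[\![P(\bar\tau)]\!]=[\![P]\!](\bar\tau)$; $[\![\varphi\dotminus\psi]\!]=[\![\varphi]\!]\dotminus[\![\psi]\!]$, etc.; $[\![\inf_y\varphi(\bar x,y)]\!](\bar{\mathbf a})$ is the infimum in the complete lattice $L^1(\mathcal F,[0,1])$ of $\{[\![\varphi(\bar{\mathbf a},\mathbf b)]\!]:\mathbf b\in\mathbf N\}$, and similarly for $\sup$. *)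

From Stdlib Require Import Reals Lra.
From Coquelicot Require Import Rbar Lub.
Open Scope R_scope.

Definition fin (n : nat) := {i : nat | (i < n)%nat}.

Record Sig := {
  Fsym : Type;
  farity : Fsym -> nat;
  fmod : Fsym -> R -> R;
  fmod_pos : forall f eps, 0 < eps -> 0 < fmod f eps;
  Psym : Type;
  parity : Psym -> nat;
  pmod : Psym -> R -> R;
  pmod_pos : forall P eps, 0 < eps -> 0 < pmod P eps
}.

(** Terms (de Bruijn variables). *)
Inductive term (L : Sig) : Type :=
| Var : nat -> term L
| App : forall f : Fsym L, (fin (farity L f) -> term L) -> term L.
Arguments Var {L} _.
Arguments App {L} _ _.

(** Formulas: atomic P(t..), d(t1,t2) (d is the distinguished predicate),
    connectives 0, neg, 1/2, -., and quantifiers sup, inf (binding var 0). *)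
Inductive formula (L : Sig) : Type :=
| FPred : forall P : Psym L, (fin (parity L P) -> term L) -> formula L
| FDist : term L -> term L -> formula L
| FZero : formula L
| FNeg : formula L -> formula L
| FHalf : formula L -> formula L
| FMinus : formula L -> formula L -> formula L
| FSup : formula L -> formula L
| FInf : formula L -> formula L.
Arguments FPred {L} _ _.
Arguments FDist {L} _ _.
Arguments FZero {L}.
Arguments FNeg {L} _.
Arguments FHalf {L} _.
Arguments FMinus {L} _ _.
Arguments FSup {L} _.
Arguments FInf {L} _.

Definition scons {A : Type} (a : A) (e : nat -> A) : nat -> A :=
  fun k => match k with O => a | S k' => e k' end.

Record Struct (L : Sig) := {
  carrier :> Type;
  point : carrier;
  dist : carrier -> carrier -> R;
  dist_bounds : forall x y, 0 <= dist x y <= 1;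
  dist_refl : forall x, dist x x = 0;
  dist_sep : forall x y, dist x y = 0 -> x = y;
  dist_sym : forall x y, dist x y = dist y x;
  dist_tri : forall x y z, dist x z <= dist x y + dist y z;
  dist_complete : forall s : nat -> carrier,
    (forall eps, 0 < eps -> exists N, forall m n, (N <= m)%nat -> (N <= n)%nat ->
        dist (s m) (s n) < eps) ->
    exists x, forall eps, 0 < eps -> exists N, forall n, (N <= n)%nat -> dist (s n) x < eps;
  fint : forall f : Fsym L, (fin (farity L f) -> carrier) -> carrier;
  fint_uc : forall f eps (x y : fin (farity L f) -> carrier), 0 < eps ->
    (forall i, dist (x i) (y i) < fmod L f eps) -> dist (fint f x) (fint f y) <= eps;
  pint : forall P : Psym L, (fin (parity L P) -> carrier) -> R;
  pint_bounds : forall P x, 0 <= pint P x <= 1;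
  pint_uc : forall P eps (x y : fin (parity L P) -> carrier), 0 < eps ->
    (forall i, dist (x i) (y i) < pmod L P eps) -> Rabs (pint P x - pint P y) <= eps
}.
Arguments point {L} _.
Arguments dist {L} _ _ _.
Arguments fint {L} _ _ _.
Arguments pint {L} _ _ _.

Fixpoint teval {L : Sig} (S : Struct L) (e : nat -> S) (t : term L) : S :=
  match t with
  | Var k => e k
  | App f args => fint S f (fun i => teval S e (args i))
  end.

Fixpoint fval {L : Sig} (S : Struct L) (phi : formula L) (e : nat -> S) : R :=
  match phi with
  | FPred P args => pint S P (fun i => teval S e (args i))
  | FDist t1 t2 => dist S (teval S e t1) (teval S e t2)
  | FZero => 0
  | FNeg p => 1 - fval S p e
  | FHalf p => fval S p e / 2
  | FMinus p q => Rmax (fval S p e - fval S q e) 0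
  | FSup p => real (Lub_Rbar (fun r => exists b : S, r = fval S p (scons b e)))
  | FInf p => real (Glb_Rbar (fun r => exists b : S, r = fval S p (scons b e)))
  end.

Definition Prod {L : Sig} {Omega : Type} (M : Omega -> Struct L) : Type :=
  forall w : Omega, carrier L (M w).

Definition inA {Omega : Type} (X : Omega -> R) : Prop := forall w, 0 <= X w <= 1.

Definition integration_functional {Omega : Type} (E : (Omega -> R) -> R) : Prop :=
  (forall X, inA X -> 0 <= E X <= 1) /\
  E (fun _ => 1) = 1 /\
  (forall X Y, inA X -> inA Y -> inA (fun w => X w + Y w) ->
     E (fun w => X w + Y w) = E X + E Y).

Definition bracket {L : Sig} {Omega : Type} (M : Omega -> Struct L)
  (phi : formula L) (a : nat -> Prod M) : Omega -> R :=
  fun w => fval (M w) phi (fun k => a k w).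

Definition full {L : Sig} {Omega : Type} (M : Omega -> Struct L) : Prop :=
  forall (a b : Prod M) (X : Omega -> R), inA X ->
    exists c : Prod M, forall w,
      (X w = 1 -> c w = a w) /\ (X w = 0 -> c w = b w).

Definition dM {L : Sig} {Omega : Type} (M : Omega -> Struct L)
  (E : (Omega -> R) -> R) (a b : Prod M) : R :=
  E (fun w => dist (M w) (a w) (b w)).

(** The completion of the quotient is represented by Cauchy sequences
    (setoid style): an element of hat M is a Cauchy sequence in (M, dM). *)
Definition cauchyM {L : Sig} {Omega : Type} (M : Omega -> Struct L)
  (E : (Omega -> R) -> R) (s : nat -> Prod M) : Prop :=
  forall eps, 0 < eps -> exists N, forall m n, (N <= m)%nat -> (N <= n)%nat ->
    dM M E (s m) (s n) < eps.

(** An element of hat A: a Cauchy sequence in (A, d(X,Y) = E|X-Y|). *)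
Definition isAhat {Omega : Type} (E : (Omega -> R) -> R) (Z : nat -> Omega -> R) : Prop :=
  (forall n, inA (Z n)) /\
  (forall eps, 0 < eps -> exists N, forall m n, (N <= m)%nat -> (N <= n)%nat ->
     E (fun w => Rabs (Z m w - Z n w)) < eps).

(** Equality in hat A (distance zero in the limit). *)
Definition eqvA {Omega : Type} (E : (Omega -> R) -> R) (Z W : nat -> Omega -> R) : Prop :=
  forall eps, 0 < eps -> exists N, forall n, (N <= n)%nat ->
    E (fun w => Rabs (Z n w - W n w)) < eps.

(** Order in hat A: Z <= W iff Z -. W = 0 in hat A. *)
Definition leA {Omega : Type} (E : (Omega -> R) -> R) (Z W : nat -> Omega -> R) : Prop :=
  forall eps, 0 < eps -> exists N, forall n, (N <= n)%nat ->
    E (fun w => Rmax (Z n w - W n w) 0) < eps.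

(** [[phi]](e) = Z in the associated structure (hat M, hat A), where the
    environment e assigns to each variable k an element of hat M (the Cauchy
    sequence n |-> e k n) and Z represents an element of hat A. *)
Fixpoint Den {L : Sig} {Omega : Type} (M : Omega -> Struct L)
  (E : (Omega -> R) -> R) (phi : formula L) (e : nat -> nat -> Prod M)
  (Z : nat -> Omega -> R) : Prop :=
  match phi with
  | FPred P args =>
      isAhat E Z /\
      eqvA E Z (fun n w => pint (M w) P (fun i => teval (M w) (fun k => e k n w) (args i)))
  | FDist t1 t2 =>
      isAhat E Z /\
      eqvA E Z (fun n w => dist (M w) (teval (M w) (fun k => e k n w) t1)
                                      (teval (M w) (fun k => e k n w) t2))
  | FZero => isAhat E Z /\ eqvA E Z (fun _ _ => 0)
  | FNeg p => isAhat E Z /\ exists W, Den M E p e W /\ eqvA E Z (fun n w => 1 - W n w)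
  | FHalf p => isAhat E Z /\ exists W, Den M E p e W /\ eqvA E Z (fun n w => W n w / 2)
  | FMinus p q => isAhat E Z /\ exists W1 W2, Den M E p e W1 /\ Den M E q e W2 /\
      eqvA E Z (fun n w => Rmax (W1 n w - W2 n w) 0)
  | FSup p => isAhat E Z /\
      (forall b, cauchyM M E b -> exists W, Den M E p (scons b e) W) /\
      (forall b W, cauchyM M E b -> Den M E p (scons b e) W -> leA E W Z) /\
      (forall V, isAhat E V ->
         (forall b W, cauchyM M E b -> Den M E p (scons b e) W -> leA E W V) ->
         leA E Z V)
  | FInf p => isAhat E Z /\
      (forall b, cauchyM M E b -> exists W, Den M E p (scons b e) W) /\
      (forall b W, cauchyM M E b -> Den M E p (scons b e) W -> leA E Z W) /\
      (forall V, isAhat E V ->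
         (forall b W, cauchyM M E b -> Den M E p (scons b e) W -> leA E V W) ->
         leA E V Z)
  end.

(* Every formula is uniformly continuous in finitely many of its variables, with
   a modulus independent of the structure.  Combined with a Markov inequality for
   [E], this makes the world-by-world values [n |-> <phi(e_n)>] a Cauchy sequence
   in mean whenever the environment [e_n] is, and by induction on [phi] that
   sequence represents [[phi]](e) in the completion.  Connectives pass to the
   limit because they are 1-Lipschitz.  For [sup] the pointwise supremum bounds
   every instance, and choosing near-maximising witnesses world by world at one
   late stage yields a single element of the main sort whose instance is close to
   it in mean, so it is the least upper bound in [hat A]; [inf] is dual.
   Constant environments give the theorem; fullness holds because [M] is a full
   product. *)

From Stdlib Require Import Reals Lra Lia Arith List Classical IndefiniteDescription FunctionalExtensionality.
From Coquelicot Require Import Rbar Lub.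
Open Scope R_scope.

Ltac lra_cases := unfold Rmax, Rmin in *;
  repeat match goal with
  | |- context [Rle_dec ?a ?b] => destruct (Rle_dec a b)
  | H : context [Rle_dec ?a ?b] |- _ => destruct (Rle_dec a b)
  end; try split_Rabs; lra.

Lemma fin_common_bound (n : nat) (Q : fin n -> nat -> Prop) :
  (forall a K K', (K <= K')%nat -> Q a K -> Q a K') ->
  (forall a, exists K, Q a K) -> exists K, forall a, Q a K.
Proof.
  intros Hmono Hex.
  assert (Hpre : forall m, (m <= n)%nat ->
            exists K, forall a : fin n, (proj1_sig a < m)%nat -> Q a K).
  { induction m as [|m IH]; intros Hm.
    - exists O. intros [x Hx] Hlt. simpl in Hlt. lia.
    - destruct (IH ltac:(lia)) as [K0 HK0].
      destruct (Hex (exist _ m Hm)) as [K1 HK1].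
      exists (Nat.max K0 K1). intros [x Hx] Hlt. simpl in Hlt.
      destruct (Nat.eq_dec x m) as [->|Hne].
      + rewrite (le_unique _ _ Hx Hm). apply (Hmono _ K1); [lia|exact HK1].
      + apply (Hmono _ K0); [lia|]. apply HK0. simpl. lia. }
  destruct (Hpre n (le_n n)) as [K HK]. exists K. intros [x Hx]. apply HK. exact Hx.
Qed.

Lemma inv_pow2_bounds (i : nat) : 0 < / 2 ^ i <= 1.
Proof.
  split.
  - apply Rinv_0_lt_compat, pow_lt. lra.
  - rewrite <- Rinv_1. apply Rinv_le_contravar; [lra|]. apply pow_R1_Rle. lra.
Qed.

Lemma inv_pow2_le (i j : nat) : (i <= j)%nat -> / 2 ^ j <= / 2 ^ i.
Proof.
  intros Hij. apply Rinv_le_contravar; [apply pow_lt; lra|]. apply Rle_pow; [lra|exact Hij].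
Qed.

Lemma inv_pow2_S (i : nat) : / 2 ^ S i = / 2 ^ i / 2.
Proof. simpl. field. apply pow_nonzero. lra. Qed.

Lemma inv_pow2_small (eps : R) : 0 < eps -> exists i, / 2 ^ i < eps.
Proof.
  intros Heps.
  destruct (pow_lt_1_zero (/ 2) ltac:(rewrite Rabs_right; lra) eps Heps) as [i Hi].
  exists i. specialize (Hi i (le_n i)).
  rewrite pow_inv, Rabs_right in Hi; [exact Hi|]. left. apply inv_pow2_bounds.
Qed.

Lemma Lub_range_spec {B : Type} (b0 : B) (f : B -> R) (c : R) :
  (forall b, f b <= c) ->
  (forall b, f b <= real (Lub_Rbar (fun r => exists b, r = f b))) /\
  (forall y, (forall b, f b <= y) -> real (Lub_Rbar (fun r => exists b, r = f b)) <= y).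
Proof.
  intros Hc. destruct (Lub_Rbar_correct (fun r => exists b, r = f b)) as [Hub Hleast].
  remember (Lub_Rbar (fun r => exists b, r = f b)) as l.
  assert (Hle : Rbar_le l c) by (apply Hleast; intros x [b ->]; apply Hc).
  assert (Hge : Rbar_le (f b0) l) by (apply Hub; exists b0; reflexivity).
  destruct l as [s| |]; simpl in *; try contradiction.
  split.
  - intros b. apply (Hub (f b)). exists b. reflexivity.
  - intros y Hy. apply (Hleast (Finite y)). intros x [b ->]. apply Hy.
Qed.

Lemma Glb_range_spec {B : Type} (b0 : B) (f : B -> R) (c : R) :
  (forall b, c <= f b) ->
  (forall b, real (Glb_Rbar (fun r => exists b, r = f b)) <= f b) /\
  (forall y, (forall b, y <= f b) -> y <= real (Glb_Rbar (fun r => exists b, r = f b))).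
Proof.
  intros Hc. destruct (Glb_Rbar_correct (fun r => exists b, r = f b)) as [Hlb Hgreatest].
  remember (Glb_Rbar (fun r => exists b, r = f b)) as l.
  assert (Hge : Rbar_le c l) by (apply Hgreatest; intros x [b ->]; apply Hc).
  assert (Hle : Rbar_le l (f b0)) by (apply Hlb; exists b0; reflexivity).
  destruct l as [s| |]; simpl in *; try contradiction.
  split.
  - intros b. apply (Hlb (f b)). exists b. reflexivity.
  - intros y Hy. apply (Hgreatest (Finite y)). intros x [b ->]. apply Hy.
Qed.

Lemma dist_lipschitz {L : Sig} (T : Struct L) (x1 x2 y1 y2 : T) :
  Rabs (dist T x1 x2 - dist T y1 y2) <= dist T x1 y1 + dist T x2 y2.
Proof.
  pose proof (dist_tri L T x1 y1 x2). pose proof (dist_tri L T y1 y2 x2).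
  pose proof (dist_tri L T y1 x1 y2). pose proof (dist_tri L T x1 x2 y2).
  pose proof (dist_sym L T x1 y1). pose proof (dist_sym L T x2 y2).
  split_Rabs; lra.
Qed.

Section UniformContinuity.

Variable L : Sig.

Definition close (T : Struct L) (K : nat) (e e' : nat -> T) : Prop :=
  forall k, (k < K)%nat -> dist T (e k) (e' k) < / 2 ^ K.

Lemma close_mono (T : Struct L) K K' e e' :
  (K <= K')%nat -> close T K' e e' -> close T K e e'.
Proof.
  intros HK Hc k Hk. eapply Rlt_le_trans; [apply Hc; lia|]. apply inv_pow2_le, HK.
Qed.

Lemma close_scons (T : Struct L) K x e e' :
  close T K e e' -> close T K (scons x e) (scons x e').
Proof.
  intros Hc [|k] Hk; simpl.
  - rewrite dist_refl. apply inv_pow2_bounds.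
  - apply Hc. lia.
Qed.

Definition unif_cont_term (t : term L) : Prop :=
  forall i, exists K, forall (T : Struct L) e e', close T K e e' ->
    dist T (teval T e t) (teval T e' t) <= / 2 ^ i.

Definition unif_cont_formula (phi : formula L) : Prop :=
  forall i, exists K, forall (T : Struct L) e e', close T K e e' ->
    Rabs (fval T phi e - fval T phi e') <= / 2 ^ i.

Lemma unif_cont_terms (n : nat) (args : fin n -> term L) :
  (forall a, unif_cont_term (args a)) ->
  forall i, exists K, forall (T : Struct L) e e', close T K e e' ->
    forall a, dist T (teval T e (args a)) (teval T e' (args a)) <= / 2 ^ i.
Proof.
  intros Hargs i.
  destruct (fin_common_bound n (fun a K => forall (T : Struct L) e e', close T K e e' ->
      dist T (teval T e (args a)) (teval T e' (args a)) <= / 2 ^ i)) as [K HK].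
  - intros a K K' HKK' HK T e e' Hc. exact (HK T e e' (close_mono T K K' e e' HKK' Hc)).
  - intros a. apply Hargs.
  - exists K. intros T e e' Hc a. exact (HK a T e e' Hc).
Qed.

Lemma term_unif_cont (t : term L) : unif_cont_term t.
Proof.
  induction t as [k | f args IH]; intros i.
  - exists (S (Nat.max k i)). intros T e e' Hc. simpl.
    left. eapply Rlt_le_trans; [apply Hc; lia|]. apply inv_pow2_le. lia.
  - destruct (inv_pow2_small (fmod L f (/ 2 ^ i))) as [j Hj].
    { apply fmod_pos, inv_pow2_bounds. }
    destruct (unif_cont_terms _ args IH j) as [K HK].
    exists K. intros T e e' Hc. simpl. apply fint_uc; [apply inv_pow2_bounds|].
    intros a. eapply Rle_lt_trans; [apply HK, Hc|exact Hj].
Qed.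

Lemma fval_bounds (phi : formula L) : forall (T : Struct L) e, 0 <= fval T phi e <= 1.
Proof.
  induction phi as [P args|t1 t2| |p IH|p IH|p IHp q IHq|p IH|p IH]; intros T e; simpl.
  - apply pint_bounds.
  - apply dist_bounds.
  - lra.
  - specialize (IH T e). lra.
  - specialize (IH T e). lra.
  - specialize (IHp T e). specialize (IHq T e). lra_cases.
  - destruct (Lub_range_spec (point T) (fun x => fval T p (scons x e)) 1) as [Hub Hleast].
    { intros x. apply IH. }
    pose proof (Hub (point T)). pose proof (IH T (scons (point T) e)). split; [lra|].
    apply Hleast. intros x. apply IH.
  - destruct (Glb_range_spec (point T) (fun x => fval T p (scons x e)) 0) as [Hlb Hgreatest].
    { intros x. apply IH. }
    pose proof (Hlb (point T)). pose proof (IH T (scons (point T) e)). split; [|lra].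
    apply Hgreatest. intros x. apply IH.
Qed.

Lemma fval_sup_spec (T : Struct L) p e :
  (forall x, fval T p (scons x e) <= fval T (FSup p) e) /\
  (forall y, (forall x, fval T p (scons x e) <= y) -> fval T (FSup p) e <= y).
Proof. apply (Lub_range_spec (point T) _ 1). intros x. apply fval_bounds. Qed.

Lemma fval_inf_spec (T : Struct L) p e :
  (forall x, fval T (FInf p) e <= fval T p (scons x e)) /\
  (forall y, (forall x, y <= fval T p (scons x e)) -> y <= fval T (FInf p) e).
Proof. apply (Glb_range_spec (point T) _ 0). intros x. apply fval_bounds. Qed.

Lemma fval_sup_approx (T : Struct L) p e eps :
  0 < eps -> exists x, fval T (FSup p) e - fval T p (scons x e) < eps.
Proof.
  intros Heps. apply not_all_not_ex. intros Hnone.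
  assert (fval T (FSup p) e <= fval T (FSup p) e - eps); [|lra].
  apply fval_sup_spec. intros x. specialize (Hnone x). apply Rnot_lt_le in Hnone. lra.
Qed.

Lemma fval_inf_approx (T : Struct L) p e eps :
  0 < eps -> exists x, fval T p (scons x e) - fval T (FInf p) e < eps.
Proof.
  intros Heps. apply not_all_not_ex. intros Hnone.
  assert (fval T (FInf p) e + eps <= fval T (FInf p) e); [|lra].
  apply fval_inf_spec. intros x. specialize (Hnone x). apply Rnot_lt_le in Hnone. lra.
Qed.

Lemma fval_sup_dist (T : Struct L) p e e' r :
  (forall x, Rabs (fval T p (scons x e) - fval T p (scons x e')) <= r) ->
  Rabs (fval T (FSup p) e - fval T (FSup p) e') <= r.
Proof.
  intros Hx.
  destruct (fval_sup_spec T p e) as [Hub Hleast].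
  destruct (fval_sup_spec T p e') as [Hub' Hleast'].
  assert (fval T (FSup p) e <= fval T (FSup p) e' + r).
  { apply Hleast. intros x. specialize (Hx x). specialize (Hub' x). split_Rabs; lra. }
  assert (fval T (FSup p) e' <= fval T (FSup p) e + r).
  { apply Hleast'. intros x. specialize (Hx x). specialize (Hub x). split_Rabs; lra. }
  split_Rabs; lra.
Qed.

Lemma fval_inf_dist (T : Struct L) p e e' r :
  (forall x, Rabs (fval T p (scons x e) - fval T p (scons x e')) <= r) ->
  Rabs (fval T (FInf p) e - fval T (FInf p) e') <= r.
Proof.
  intros Hx.
  destruct (fval_inf_spec T p e) as [Hlb Hgreatest].
  destruct (fval_inf_spec T p e') as [Hlb' Hgreatest'].
  assert (fval T (FInf p) e' - r <= fval T (FInf p) e).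
  { apply Hgreatest. intros x. specialize (Hx x). specialize (Hlb' x). split_Rabs; lra. }
  assert (fval T (FInf p) e - r <= fval T (FInf p) e').
  { apply Hgreatest'. intros x. specialize (Hx x). specialize (Hlb x). split_Rabs; lra. }
  split_Rabs; lra.
Qed.

Lemma formula_unif_cont (phi : formula L) : unif_cont_formula phi.
Proof.
  induction phi as [P args|t1 t2| |p IH|p IH|p IHp q IHq|p IH|p IH]; intros i.
  - destruct (inv_pow2_small (pmod L P (/ 2 ^ i))) as [j Hj].
    { apply pmod_pos, inv_pow2_bounds. }
    destruct (unif_cont_terms _ args (fun a => term_unif_cont (args a)) j) as [K HK].
    exists K. intros T e e' Hc. simpl. apply pint_uc; [apply inv_pow2_bounds|].
    intros a. eapply Rle_lt_trans; [apply HK, Hc|exact Hj].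
  - destruct (term_unif_cont t1 (S i)) as [K1 H1].
    destruct (term_unif_cont t2 (S i)) as [K2 H2].
    exists (Nat.max K1 K2). intros T e e' Hc. simpl.
    specialize (H1 T e e' (close_mono T _ _ e e' (Nat.le_max_l K1 K2) Hc)).
    specialize (H2 T e e' (close_mono T _ _ e e' (Nat.le_max_r K1 K2) Hc)).
    pose proof (dist_lipschitz T (teval T e t1) (teval T e t2) (teval T e' t1) (teval T e' t2)).
    rewrite inv_pow2_S in *. lra.
  - exists O. intros T e e' _. simpl. rewrite Rminus_diag, Rabs_R0. left. apply inv_pow2_bounds.
  - destruct (IH i) as [K HK]. exists K. intros T e e' Hc.
    specialize (HK T e e' Hc). simpl. split_Rabs; lra.
  - destruct (IH i) as [K HK]. exists K. intros T e e' Hc.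
    specialize (HK T e e' Hc). simpl. split_Rabs; lra.
  - destruct (IHp (S i)) as [K1 H1]. destruct (IHq (S i)) as [K2 H2].
    exists (Nat.max K1 K2). intros T e e' Hc. simpl.
    specialize (H1 T e e' (close_mono T _ _ e e' (Nat.le_max_l K1 K2) Hc)).
    specialize (H2 T e e' (close_mono T _ _ e e' (Nat.le_max_r K1 K2) Hc)).
    rewrite inv_pow2_S in *. lra_cases.
  - destruct (IH i) as [K HK]. exists K. intros T e e' Hc.
    apply fval_sup_dist. intros x. apply HK, close_scons, Hc.
  - destruct (IH i) as [K HK]. exists K. intros T e e' Hc.
    apply fval_inf_dist. intros x. apply HK, close_scons, Hc.
Qed.

End UniformContinuity.

Section Integration.

Context {Omega : Type} (E : (Omega -> R) -> R).
Hypothesis HE : integration_functional E.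

Lemma inA_abs_sub (X Y : Omega -> R) : inA X -> inA Y -> inA (fun w => Rabs (X w - Y w)).
Proof. intros HX HY w. specialize (HX w). specialize (HY w). lra_cases. Qed.

Lemma inA_pos_sub (X Y : Omega -> R) : inA X -> inA Y -> inA (fun w => Rmax (X w - Y w) 0).
Proof. intros HX HY w. specialize (HX w). specialize (HY w). lra_cases. Qed.

Lemma inA_min_scale (c : R) (Y : Omega -> R) :
  0 <= c -> inA Y -> inA (fun w => Rmin 1 (c * Y w)).
Proof.
  intros Hc HY w. split; [|apply Rmin_l].
  apply Rmin_glb; [lra|]. apply Rmult_le_pos; [exact Hc|apply HY].
Qed.

Lemma E_ext (X Y : Omega -> R) : (forall w, X w = Y w) -> E X = E Y.
Proof. intros H. f_equal. apply functional_extensionality. exact H. Qed.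

Lemma E_zero : E (fun _ => 0) = 0.
Proof.
  destruct HE as [_ [_ Hadd]].
  assert (H0 : inA (fun _ : Omega => 0)) by (intros w; lra).
  pose proof (Hadd _ _ H0 H0 ltac:(intros w; lra)) as H. cbv beta in H.
  rewrite (E_ext (fun _ => 0 + 0) (fun _ => 0)) in H by (intros; ring). lra.
Qed.

Lemma E_le (X Y : Omega -> R) :
  inA X -> inA Y -> (forall w, X w <= Y w) -> E X <= E Y.
Proof.
  intros HX HY Hle. destruct HE as [Hb [_ Hadd]].
  assert (HD : inA (fun w => Y w - X w))
    by (intros w; specialize (HX w); specialize (HY w); specialize (Hle w); lra).
  pose proof (Hadd X _ HX HD ltac:(intros w; specialize (HY w); lra)) as H. cbv beta in H.
  rewrite (E_ext (fun w => X w + (Y w - X w)) Y) in H by (intros; ring).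
  pose proof (Hb _ HD). lra.
Qed.

Lemma E_half (X : Omega -> R) : inA X -> E (fun w => X w / 2) = E X / 2.
Proof.
  intros HX. destruct HE as [_ [_ Hadd]].
  assert (HH : inA (fun w => X w / 2)) by (intros w; specialize (HX w); lra).
  pose proof (Hadd _ _ HH HH ltac:(intros w; specialize (HX w); lra)) as H. cbv beta in H.
  rewrite (E_ext (fun w => X w / 2 + X w / 2) X) in H by (intros; field). lra.
Qed.

(* Halving keeps [Y w + W w] inside [0, 1], where additivity applies. *)
Lemma E_le_add (X Y W : Omega -> R) :
  inA X -> inA Y -> inA W -> (forall w, X w <= Y w + W w) -> E X <= E Y + E W.
Proof.
  intros HX HY HW Hle. destruct HE as [_ [_ Hadd]].
  assert (HY2 : inA (fun w => Y w / 2)) by (intros w; specialize (HY w); lra).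
  assert (HW2 : inA (fun w => W w / 2)) by (intros w; specialize (HW w); lra).
  assert (HS : inA (fun w => Y w / 2 + W w / 2))
    by (intros w; specialize (HY w); specialize (HW w); lra).
  pose proof (Hadd _ _ HY2 HW2 HS) as Hsum.
  assert (E (fun w => X w / 2) <= E (fun w => Y w / 2 + W w / 2)).
  { apply E_le; [intros w; specialize (HX w); lra|exact HS|].
    intros w. specialize (Hle w). lra. }
  rewrite (E_half X HX), (E_half Y HY), (E_half W HW) in *. lra.
Qed.

Lemma E_inv_pow2 (i : nat) : E (fun _ => / 2 ^ i) = / 2 ^ i.
Proof.
  induction i as [|i IH].
  - simpl. rewrite Rinv_1. apply HE.
  - assert (HA : inA (fun _ : Omega => / 2 ^ i))
      by (intros w; pose proof (inv_pow2_bounds i); lra).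
    rewrite (E_ext _ (fun w => / 2 ^ i / 2)) by (intros; apply inv_pow2_S).
    rewrite (E_half _ HA), IH. symmetry. apply inv_pow2_S.
Qed.

Lemma E_min_scale (j : nat) (Y : Omega -> R) :
  inA Y -> E (fun w => Rmin 1 (2 ^ j * Y w)) <= 2 ^ j * E Y.
Proof.
  intros HY. induction j as [|j IH].
  - rewrite (E_ext _ Y); [simpl; lra|].
    intros w. specialize (HY w). simpl. lra_cases.
  - assert (Hpos : 0 <= 2 ^ j) by (apply pow_le; lra).
    assert (E (fun w => Rmin 1 (2 ^ S j * Y w)) <=
            E (fun w => Rmin 1 (2 ^ j * Y w)) + E (fun w => Rmin 1 (2 ^ j * Y w))).
    { apply E_le_add; try apply inA_min_scale; auto; [simpl; lra|].
      intros w. assert (0 <= 2 ^ j * Y w) by (apply Rmult_le_pos; [lra|apply HY]).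
      simpl. lra_cases. }
    simpl in *. lra.
Qed.

Definition sumA (Ds : list (Omega -> R)) (w : Omega) : R :=
  fold_right (fun D s => D w + s) 0 Ds.

Definition sumE (Ds : list (Omega -> R)) : R :=
  fold_right (fun D s => E D + s) 0 Ds.

Lemma sumA_nonneg (Ds : list (Omega -> R)) (w : Omega) : Forall inA Ds -> 0 <= sumA Ds w.
Proof. induction 1 as [|D Ds HD _ IH]; simpl; [lra|]. specialize (HD w). lra. Qed.

Lemma sumA_ge_mem (Ds : list (Omega -> R)) (D : Omega -> R) (w : Omega) :
  Forall inA Ds -> In D Ds -> D w <= sumA Ds w.
Proof.
  induction 1 as [|D' Ds HD' HDs IH]; intros Hin; [destruct Hin|].
  simpl. pose proof (sumA_nonneg Ds w HDs). specialize (HD' w).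
  destruct Hin as [<-|Hin]; [lra|]. specialize (IH Hin). lra.
Qed.

Lemma E_trunc_sum (Ds : list (Omega -> R)) :
  Forall inA Ds -> E (fun w => Rmin 1 (sumA Ds w)) <= sumE Ds.
Proof.
  induction 1 as [|D Ds HD HDs IH]; simpl.
  - rewrite (E_ext _ (fun _ => 0)) by (intros w; apply Rmin_right; lra).
    rewrite E_zero. lra.
  - assert (HS : inA (fun w => Rmin 1 (sumA Ds w))).
    { intros w. pose proof (sumA_nonneg Ds w HDs). lra_cases. }
    assert (E (fun w => Rmin 1 (D w + sumA Ds w)) <= E D + E (fun w => Rmin 1 (sumA Ds w))).
    { apply E_le_add; auto.
      - intros w. pose proof (sumA_nonneg Ds w HDs). specialize (HD w). lra_cases.
      - intros w. pose proof (sumA_nonneg Ds w HDs). specialize (HD w). lra_cases. }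
    lra.
Qed.

(* Markov's inequality: where [sumA Ds >= 2^-K] the bound [G <= 1] is paid for by
   [2^K * sumE Ds]. *)
Lemma E_markov (G : Omega -> R) (Ds : list (Omega -> R)) (i K : nat) :
  inA G -> Forall inA Ds ->
  (forall w, sumA Ds w < / 2 ^ K -> G w <= / 2 ^ i) ->
  E G <= / 2 ^ i + 2 ^ K * sumE Ds.
Proof.
  intros HG HDs Hsmall.
  set (Y := fun w => Rmin 1 (sumA Ds w)).
  assert (HY : inA Y) by (intros w; pose proof (sumA_nonneg Ds w HDs); unfold Y; lra_cases).
  assert (HpK : 0 < 2 ^ K) by (apply pow_lt; lra).
  assert (HT : inA (fun w => Rmin 1 (2 ^ K * Y w))) by (apply inA_min_scale; [lra|exact HY]).
  assert (Hpt : forall w, G w <= / 2 ^ i + Rmin 1 (2 ^ K * Y w)).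
  { intros w. pose proof (HT w).
    destruct (Rlt_le_dec (sumA Ds w) (/ 2 ^ K)) as [Hlt|Hge].
    - pose proof (Hsmall w Hlt). lra.
    - assert (/ 2 ^ K <= Y w) by (unfold Y; apply Rmin_glb; [apply inv_pow2_bounds|exact Hge]).
      assert (2 ^ K * / 2 ^ K <= 2 ^ K * Y w) by (apply Rmult_le_compat_l; lra).
      rewrite Rinv_r in * by lra. rewrite Rmin_left by lra.
      pose proof (HG w). pose proof (inv_pow2_bounds i). lra. }
  assert (E G <= E (fun _ => / 2 ^ i) + E (fun w => Rmin 1 (2 ^ K * Y w))).
  { apply E_le_add; auto. intros w. pose proof (inv_pow2_bounds i). lra. }
  pose proof (E_min_scale K Y HY) as Hscale. pose proof (E_trunc_sum Ds HDs) as Htrunc.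
  rewrite E_inv_pow2 in *.
  assert (2 ^ K * E Y <= 2 ^ K * sumE Ds) by (apply Rmult_le_compat_l; [lra|exact Htrunc]).
  lra.
Qed.

Definition inAseq (X : nat -> Omega -> R) : Prop := forall n, inA (X n).

(* [eqvA E Z W] and [leA E Z W] unfold to [mean_null] of [|Z - W|] and of
   [Rmax (Z - W) 0]; the lemmas below are applied to them directly. *)
Definition mean_null (F : nat -> Omega -> R) : Prop :=
  forall eps, 0 < eps -> exists N, forall n, (N <= n)%nat -> E (F n) < eps.

Lemma mean_null_le (F G : nat -> Omega -> R) :
  inAseq F -> inAseq G -> (forall n w, F n w <= G n w) -> mean_null G -> mean_null F.
Proof.
  intros HF HG Hle HGnull eps Heps. destruct (HGnull eps Heps) as [N HN].
  exists N. intros n Hn. specialize (HN n Hn).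
  pose proof (E_le (F n) (G n) (HF n) (HG n) (Hle n)). lra.
Qed.

Lemma mean_null_le_add (F G H : nat -> Omega -> R) :
  inAseq F -> inAseq G -> inAseq H -> (forall n w, F n w <= G n w + H n w) ->
  mean_null G -> mean_null H -> mean_null F.
Proof.
  intros HF HG HH Hle HGnull HHnull eps Heps.
  destruct (HGnull (eps / 2)) as [N1 HN1]; [lra|].
  destruct (HHnull (eps / 2)) as [N2 HN2]; [lra|].
  exists (Nat.max N1 N2). intros n Hn.
  specialize (HN1 n ltac:(lia)). specialize (HN2 n ltac:(lia)).
  pose proof (E_le_add (F n) (G n) (H n) (HF n) (HG n) (HH n) (Hle n)). lra.
Qed.

Lemma eqvA_refl (Z : nat -> Omega -> R) : eqvA E Z Z.
Proof.
  intros eps Heps. exists O. intros n _.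
  rewrite (E_ext _ (fun _ => 0)), E_zero; [exact Heps|].
  intros w. rewrite Rminus_diag, Rabs_R0. reflexivity.
Qed.

Lemma eqvA_sym (Z W : nat -> Omega -> R) : eqvA E Z W -> eqvA E W Z.
Proof.
  intros H eps Heps. destruct (H eps Heps) as [N HN]. exists N. intros n Hn.
  rewrite (E_ext _ (fun w => Rabs (Z n w - W n w))) by (intros; apply Rabs_minus_sym).
  apply HN, Hn.
Qed.

Lemma eqvA_trans (X Y Z : nat -> Omega -> R) :
  inAseq X -> inAseq Y -> inAseq Z -> eqvA E X Y -> eqvA E Y Z -> eqvA E X Z.
Proof.
  intros HX HY HZ. apply mean_null_le_add; intros n; try apply inA_abs_sub; auto.
  intros w. split_Rabs; lra.
Qed.

Lemma leA_of_eqvA (X Y : nat -> Omega -> R) :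
  inAseq X -> inAseq Y -> eqvA E X Y -> leA E X Y.
Proof.
  intros HX HY. apply mean_null_le; intros n; try apply inA_abs_sub; try apply inA_pos_sub; auto.
  intros w. lra_cases.
Qed.

Lemma leA_of_pointwise (X Y : nat -> Omega -> R) :
  (forall n w, X n w <= Y n w) -> leA E X Y.
Proof.
  intros Hle eps Heps. exists O. intros n _.
  rewrite (E_ext _ (fun _ => 0)), E_zero; [exact Heps|].
  intros w. apply Rmax_right. specialize (Hle n w). lra.
Qed.

Lemma leA_trans (X Y Z : nat -> Omega -> R) :
  inAseq X -> inAseq Y -> inAseq Z -> leA E X Y -> leA E Y Z -> leA E X Z.
Proof.
  intros HX HY HZ. apply mean_null_le_add; intros n; try apply inA_pos_sub; auto.
  intros w. lra_cases.
Qed.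

Lemma leA_antisym_iff (X Y : nat -> Omega -> R) :
  inAseq X -> inAseq Y -> (leA E X Y /\ leA E Y X <-> eqvA E X Y).
Proof.
  intros HX HY. split.
  - intros [HXY HYX]. revert HXY HYX.
    apply mean_null_le_add; intros n; try apply inA_abs_sub; try apply inA_pos_sub; auto.
    intros w. lra_cases.
  - intros Heqv. split; apply leA_of_eqvA; auto. apply eqvA_sym, Heqv.
Qed.

Lemma leA_of_interpolants (X V : nat -> Omega -> R) :
  inAseq X -> inAseq V ->
  (forall eps, 0 < eps -> exists Y N, inAseq Y /\ forall n, (N <= n)%nat ->
     E (fun w => Rmax (X n w - Y n w) 0) < eps /\ E (fun w => Rmax (Y n w - V n w) 0) < eps) ->
  leA E X V.
Proof.
  intros HX HV Hint eps Heps.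
  destruct (Hint (eps / 2)) as [Y [N [HY HN]]]; [lra|].
  exists N. intros n Hn. destruct (HN n Hn) as [H1 H2].
  assert (E (fun w => Rmax (X n w - V n w) 0) <=
          E (fun w => Rmax (X n w - Y n w) 0) + E (fun w => Rmax (Y n w - V n w) 0)).
  { apply E_le_add; try apply inA_pos_sub; auto. intros w. lra_cases. }
  lra.
Qed.

Lemma eqvA_map (g : R -> R) (X Y : nat -> Omega -> R) :
  (forall x y, Rabs (g x - g y) <= Rabs (x - y)) ->
  inAseq X -> inAseq Y -> eqvA E X Y ->
  eqvA E (fun n w => g (X n w)) (fun n w => g (Y n w)).
Proof.
  intros Hg HX HY. apply mean_null_le.
  - intros n w. split; [apply Rabs_pos|]. eapply Rle_trans; [apply Hg|].
    specialize (HX n w). specialize (HY n w). split_Rabs; lra.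
  - intros n. apply inA_abs_sub; auto.
  - intros n w. apply Hg.
Qed.

Lemma eqvA_map2 (g : R -> R -> R) (X1 X2 Y1 Y2 : nat -> Omega -> R) :
  (forall x1 x2 y1 y2, Rabs (g x1 x2 - g y1 y2) <= Rabs (x1 - y1) + Rabs (x2 - y2)) ->
  (forall x y, 0 <= x <= 1 -> 0 <= y <= 1 -> 0 <= g x y <= 1) ->
  inAseq X1 -> inAseq X2 -> inAseq Y1 -> inAseq Y2 -> eqvA E X1 Y1 -> eqvA E X2 Y2 ->
  eqvA E (fun n w => g (X1 n w) (X2 n w)) (fun n w => g (Y1 n w) (Y2 n w)).
Proof.
  intros Hg Hg01 HX1 HX2 HY1 HY2.
  apply (mean_null_le_add _ (fun n w => Rabs (X1 n w - Y1 n w)) (fun n w => Rabs (X2 n w - Y2 n w))).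
  - intros n. apply inA_abs_sub; intros w; apply Hg01; [apply HX1|apply HX2|apply HY1|apply HY2].
  - intros n. apply inA_abs_sub; auto.
  - intros n. apply inA_abs_sub; auto.
  - intros n w. apply Hg.
Qed.

Lemma hatA_unary_iff (g : R -> R) (DenP : (nat -> Omega -> R) -> Prop) (C : nat -> Omega -> R) :
  (forall x y, Rabs (g x - g y) <= Rabs (x - y)) ->
  (forall x, 0 <= x <= 1 -> 0 <= g x <= 1) ->
  isAhat E C -> (forall W, DenP W <-> isAhat E W /\ eqvA E W C) ->
  forall Z, (isAhat E Z /\ exists W, DenP W /\ eqvA E Z (fun n w => g (W n w)))
    <-> isAhat E Z /\ eqvA E Z (fun n w => g (C n w)).
Proof.
  intros Hg Hg01 HC HDen Z. split.
  - intros [HZ [W [HW HZW]]]. apply HDen in HW as [[HWA _] HWC].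
    split; [exact HZ|]. destruct HZ as [HZA _]. destruct HC as [HCA _].
    apply eqvA_trans with (fun n w => g (W n w)).
    + exact HZA.
    + intros n w. apply Hg01, HWA.
    + intros n w. apply Hg01, HCA.
    + exact HZW.
    + apply eqvA_map; assumption.
  - intros [HZ HZC]. split; [exact HZ|]. exists C. split; [|exact HZC].
    apply HDen. split; [exact HC|apply eqvA_refl].
Qed.

Lemma hatA_binary_iff (g : R -> R -> R) (DenP DenQ : (nat -> Omega -> R) -> Prop)
  (C1 C2 : nat -> Omega -> R) :
  (forall x1 x2 y1 y2, Rabs (g x1 x2 - g y1 y2) <= Rabs (x1 - y1) + Rabs (x2 - y2)) ->
  (forall x y, 0 <= x <= 1 -> 0 <= y <= 1 -> 0 <= g x y <= 1) ->
  isAhat E C1 -> isAhat E C2 ->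
  (forall W, DenP W <-> isAhat E W /\ eqvA E W C1) ->
  (forall W, DenQ W <-> isAhat E W /\ eqvA E W C2) ->
  forall Z, (isAhat E Z /\ exists W1 W2, DenP W1 /\ DenQ W2 /\
               eqvA E Z (fun n w => g (W1 n w) (W2 n w)))
    <-> isAhat E Z /\ eqvA E Z (fun n w => g (C1 n w) (C2 n w)).
Proof.
  intros Hg Hg01 HC1 HC2 HDenP HDenQ Z. split.
  - intros [HZ [W1 [W2 [HW1 [HW2 HZW]]]]].
    apply HDenP in HW1 as [[HW1A _] HW1C]. apply HDenQ in HW2 as [[HW2A _] HW2C].
    split; [exact HZ|]. destruct HZ as [HZA _]. destruct HC1 as [HC1A _]. destruct HC2 as [HC2A _].
    apply eqvA_trans with (fun n w => g (W1 n w) (W2 n w)).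
    + exact HZA.
    + intros n w. apply Hg01; [apply HW1A|apply HW2A].
    + intros n w. apply Hg01; [apply HC1A|apply HC2A].
    + exact HZW.
    + apply eqvA_map2; assumption.
  - intros [HZ HZC]. split; [exact HZ|]. exists C1, C2. split; [|split; [|exact HZC]].
    + apply HDenP. split; [exact HC1|apply eqvA_refl].
    + apply HDenQ. split; [exact HC2|apply eqvA_refl].
Qed.

(* In a preorder whose symmetric part is [eqvA], the least upper bounds of a
   family are exactly the elements equivalent to one of them, [C]. *)
Lemma hatA_extremum_iff {B : Type} (Q : B -> Prop) (Fam : B -> (nat -> Omega -> R) -> Prop)
  (le : (nat -> Omega -> R) -> (nat -> Omega -> R) -> Prop) (C Z : nat -> Omega -> R) :
  (forall X Y W, inAseq X -> inAseq Y -> inAseq W -> le X Y -> le Y W -> le X W) ->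
  (forall X Y, inAseq X -> inAseq Y -> (le X Y /\ le Y X <-> eqvA E X Y)) ->
  (forall b, Q b -> exists W, Fam b W) ->
  (forall b W, Q b -> Fam b W -> isAhat E W) ->
  isAhat E C ->
  (forall b W, Q b -> Fam b W -> le W C) ->
  (forall V, isAhat E V -> (forall b W, Q b -> Fam b W -> le W V) -> le C V) ->
  (isAhat E Z /\ (forall b, Q b -> exists W, Fam b W) /\
     (forall b W, Q b -> Fam b W -> le W Z) /\
     (forall V, isAhat E V -> (forall b W, Q b -> Fam b W -> le W V) -> le Z V))
  <-> isAhat E Z /\ eqvA E Z C.
Proof.
  intros Htrans Hanti Hex HFam HC Hub Hleast. split.
  - intros (HZ & _ & HubZ & HleastZ). split; [exact HZ|].
    apply Hanti; [exact (proj1 HZ)|exact (proj1 HC)|]. split.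
    + apply HleastZ; [exact HC|exact Hub].
    + apply Hleast; [exact HZ|exact HubZ].
  - intros [HZ HZC]. apply Hanti in HZC as [HZC HCZ]; [|exact (proj1 HZ)|exact (proj1 HC)].
    split; [exact HZ|]. split; [exact Hex|]. split.
    + intros b W Hb HW.
      exact (Htrans W C Z (proj1 (HFam b W Hb HW)) (proj1 HC) (proj1 HZ) (Hub b W Hb HW) HCZ).
    + intros V HV HubV.
      exact (Htrans Z C V (proj1 HZ) (proj1 HC) (proj1 HV) HZC (Hleast V HV HubV)).
Qed.

Definition unif_cauchy {B : Type} (X : B -> nat -> Omega -> R) : Prop :=
  forall eps, 0 < eps -> exists N, forall b m n, (N <= m)%nat -> (N <= n)%nat ->
    E (fun w => Rabs (X b m w - X b n w)) < eps.

Lemma unif_cauchy_const {B : Type} (Z : nat -> Omega -> R) :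
  isAhat E Z -> unif_cauchy (fun _ : B => Z).
Proof. intros [_ HZ] eps Heps. destruct (HZ eps Heps) as [N HN]. exists N. auto. Qed.

Lemma mean_gap_approx {B : Type} (X Y : B -> nat -> Omega -> R) :
  (forall b, inAseq (X b)) -> (forall b, inAseq (Y b)) ->
  unif_cauchy X -> unif_cauchy Y ->
  (forall N i, exists b, forall w, X b N w - Y b N w < / 2 ^ i) ->
  forall eps, 0 < eps -> exists b N, forall n, (N <= n)%nat ->
    E (fun w => Rmax (X b n w - Y b n w) 0) < eps.
Proof.
  intros HX HY HXc HYc Hgap eps Heps. unfold inAseq in HX, HY.
  destruct (inv_pow2_small (eps / 3)) as [i Hi]; [lra|].
  destruct (HXc (eps / 3)) as [NX HNX]; [lra|].
  destruct (HYc (eps / 3)) as [NY HNY]; [lra|].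
  destruct (Hgap (Nat.max NX NY) i) as [b Hb].
  exists b, (Nat.max NX NY). intros n Hn.
  assert (HNX' : (NX <= Nat.max NX NY)%nat) by lia.
  assert (HNY' : (NY <= Nat.max NX NY)%nat) by lia.
  set (N := Nat.max NX NY) in *.
  pose proof (inv_pow2_bounds i) as Hib.
  assert (E (fun w => Rmax (X b N w - Y b n w) 0) <=
          E (fun _ => / 2 ^ i) + E (fun w => Rabs (Y b N w - Y b n w))).
  { apply E_le_add; try apply inA_pos_sub; try apply inA_abs_sub; auto; [intros w; lra|].
    intros w. specialize (Hb w). lra_cases. }
  assert (E (fun w => Rmax (X b n w - Y b n w) 0) <=
          E (fun w => Rabs (X b n w - X b N w)) + E (fun w => Rmax (X b N w - Y b n w) 0)).
  { apply E_le_add; try apply inA_pos_sub; try apply inA_abs_sub; auto.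
    intros w. lra_cases. }
  specialize (HNX b n N ltac:(lia) ltac:(lia)). specialize (HNY b N n ltac:(lia) ltac:(lia)).
  rewrite E_inv_pow2 in *. lra.
Qed.

End Integration.

Lemma full_product {L : Sig} {Omega : Type} (M : Omega -> Struct L) : full M.
Proof.
  intros a b X _. exists (fun w => if Req_EM_T (X w) 1 then a w else b w).
  intros w. destruct (Req_EM_T (X w) 1) as [H1|H1]; split; intros Hw.
  - reflexivity.
  - exfalso. lra.
  - exfalso. exact (H1 Hw).
  - reflexivity.
Qed.

Section Randomisation.

Context {L : Sig} {Omega : Type} (M : Omega -> Struct L) (E : (Omega -> R) -> R).
Hypothesis HE : integration_functional E.

Definition cauchy_env (e : nat -> nat -> Prod M) : Prop := forall k, cauchyM M E (e k).

Definition fval_seq (phi : formula L) (e : nat -> nat -> Prod M) : nat -> Omega -> R :=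
  fun n w => fval (M w) phi (fun k => e k n w).

Definition env_dists (e1 e2 : nat -> Prod M) (K : nat) : list (Omega -> R) :=
  map (fun k w => dist (M w) (e1 k w) (e2 k w)) (seq 0 K).

Definition unif_cauchy_env {B : Type} (F : B -> nat -> nat -> Prod M) : Prop :=
  forall k eps, 0 < eps -> exists N, forall b m n, (N <= m)%nat -> (N <= n)%nat ->
    dM M E (F b k m) (F b k n) < eps.

Lemma dM_refl (a : Prod M) : dM M E a a = 0.
Proof.
  unfold dM. rewrite (E_ext E _ (fun _ => 0)) by (intros w; apply dist_refl).
  apply E_zero, HE.
Qed.

Lemma cauchyM_const (a : Prod M) : cauchyM M E (fun _ => a).
Proof. intros eps Heps. exists O. intros m n _ _. rewrite dM_refl. exact Heps. Qed.

Lemma cauchy_env_scons (b : nat -> Prod M) e :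
  cauchyM M E b -> cauchy_env e -> cauchy_env (scons b e).
Proof. intros Hb He [|k]; [exact Hb|apply He]. Qed.

Lemma unif_cauchy_env_single e : cauchy_env e -> unif_cauchy_env (fun _ : unit => e).
Proof.
  intros He k eps Heps. destruct (He k eps Heps) as [N HN].
  exists N. intros _ m n. apply HN.
Qed.

Lemma unif_cauchy_env_scons_const e :
  cauchy_env e -> unif_cauchy_env (fun b0 : Prod M => scons (fun _ => b0) e).
Proof.
  intros He [|k] eps Heps.
  - exists O. intros b0 m n _ _. simpl. rewrite dM_refl. exact Heps.
  - destruct (He k eps Heps) as [N HN]. exists N. intros b0 m n. apply HN.
Qed.

Lemma env_dists_inA (e1 e2 : nat -> Prod M) (K : nat) : Forall inA (env_dists e1 e2 K).
Proof.
  apply Forall_forall. intros D HD. apply in_map_iff in HD as [k [<- _]].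
  intros w. apply dist_bounds.
Qed.

Lemma fval_mean_cont (phi : formula L) (i : nat) : exists K, forall e1 e2 : nat -> Prod M,
  E (fun w => Rabs (fval (M w) phi (fun k => e1 k w) - fval (M w) phi (fun k => e2 k w)))
  <= / 2 ^ i + 2 ^ K * sumE E (env_dists e1 e2 K).
Proof.
  destruct (formula_unif_cont L phi i) as [K HK]. exists K. intros e1 e2.
  apply E_markov; [exact HE| |apply env_dists_inA|].
  - intros w. pose proof (fval_bounds L phi (M w) (fun k => e1 k w)).
    pose proof (fval_bounds L phi (M w) (fun k => e2 k w)). split_Rabs; lra.
  - intros w Hsum. apply HK. intros k Hk. eapply Rle_lt_trans; [|exact Hsum].
    apply (sumA_ge_mem _ (fun w => dist (M w) (e1 k w) (e2 k w))); [apply env_dists_inA|].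
    apply (in_map (fun k w => dist (M w) (e1 k w) (e2 k w))), in_seq. lia.
Qed.

Lemma env_dists_small {B : Type} (F : B -> nat -> nat -> Prod M) :
  unif_cauchy_env F -> forall ks eta, 0 < eta ->
  exists N, forall b m n, (N <= m)%nat -> (N <= n)%nat ->
    sumE E (map (fun k w => dist (M w) (F b k m w) (F b k n w)) ks) < eta.
Proof.
  intros HF ks. induction ks as [|k ks IH]; intros eta Heta.
  - exists O. intros. simpl. exact Heta.
  - destruct (IH (eta / 2)) as [N1 HN1]; [lra|].
    destruct (HF k (eta / 2)) as [N2 HN2]; [lra|].
    exists (Nat.max N1 N2). intros b m n Hm Hn. simpl.
    specialize (HN1 b m n ltac:(lia) ltac:(lia)). specialize (HN2 b m n ltac:(lia) ltac:(lia)).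
    unfold dM in HN2. lra.
Qed.

Lemma fval_seq_unif_cauchy {B : Type} (F : B -> nat -> nat -> Prod M) (phi : formula L) :
  unif_cauchy_env F -> unif_cauchy E (fun b => fval_seq phi (F b)).
Proof.
  intros HF eps Heps.
  destruct (inv_pow2_small (eps / 2)) as [i Hi]; [lra|].
  destruct (fval_mean_cont phi i) as [K HK].
  assert (HpK : 0 < 2 ^ K) by (apply pow_lt; lra).
  destruct (env_dists_small F HF (seq 0 K) (eps / 2 / 2 ^ K)) as [N HN].
  { apply Rdiv_lt_0_compat; lra. }
  exists N. intros b m n Hm Hn.
  specialize (HK (fun k => F b k m) (fun k => F b k n)). specialize (HN b m n Hm Hn).
  assert (2 ^ K * sumE E (env_dists (fun k => F b k m) (fun k => F b k n) K) < eps / 2).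
  { replace (eps / 2) with (2 ^ K * (eps / 2 / 2 ^ K)) by (field; lra).
    apply Rmult_lt_compat_l; [lra|exact HN]. }
  unfold fval_seq. lra.
Qed.

Lemma fval_seq_isAhat (phi : formula L) e : cauchy_env e -> isAhat E (fval_seq phi e).
Proof.
  intros He. split.
  - intros n w. apply fval_bounds.
  - intros eps Heps.
    destruct (fval_seq_unif_cauchy _ phi (unif_cauchy_env_single e He) eps Heps) as [N HN].
    exists N. exact (HN tt).
Qed.

Lemma fval_seq_scons (phi : formula L) (b : nat -> Prod M) e n w :
  fval_seq phi (scons b e) n w = fval (M w) phi (scons (b n w) (fun k => e k n w)).
Proof. unfold fval_seq. f_equal. apply functional_extensionality. intros [|k]; reflexivity. Qed.

Lemma prod_choice (P : forall w, M w -> Prop) :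
  (forall w, exists x, P w x) -> exists b : Prod M, forall w, P w (b w).
Proof.
  intros H. exists (fun w => proj1_sig (constructive_indefinite_description _ (H w))).
  intros w. exact (proj2_sig (constructive_indefinite_description _ (H w))).
Qed.


Section Quantifiers.

Variables (p : formula L) (e : nat -> nat -> Prod M).
Hypothesis He : cauchy_env e.
Hypothesis IH : forall e', cauchy_env e' -> forall W,
  Den M E p e' W <-> isAhat E W /\ eqvA E W (fval_seq p e').

Let inst (b : nat -> Prod M) := fval_seq p (scons b e).

Lemma inst_isAhat b : cauchyM M E b -> isAhat E (inst b).
Proof. intros Hb. apply fval_seq_isAhat, cauchy_env_scons; assumption. Qed.

Lemma Den_inst_iff b W : cauchyM M E b -> Den M E p (scons b e) W <-> isAhat E W /\ eqvA E W (inst b).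
Proof. intros Hb. apply IH, cauchy_env_scons; assumption. Qed.

Lemma Den_inst b : cauchyM M E b -> Den M E p (scons b e) (inst b).
Proof. intros Hb. apply Den_inst_iff; [exact Hb|]. split; [apply inst_isAhat, Hb|apply eqvA_refl, HE]. Qed.

(* Near-extremal witnesses are chosen world by world at a single stage [N] and
   used as a constant sequence. *)
Lemma sup_mean_approx eps : 0 < eps -> exists b0 N, forall n, (N <= n)%nat ->
  E (fun w => Rmax (fval_seq (FSup p) e n w - inst (fun _ => b0) n w) 0) < eps.
Proof.
  apply (mean_gap_approx E HE (fun _ : Prod M => fval_seq (FSup p) e) (fun b0 => inst (fun _ => b0))).
  - intros _. exact (proj1 (fval_seq_isAhat _ _ He)).
  - intros b0. exact (proj1 (inst_isAhat _ (cauchyM_const b0))).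
  - apply unif_cauchy_const, fval_seq_isAhat, He.
  - apply fval_seq_unif_cauchy, unif_cauchy_env_scons_const, He.
  - intros N i.
    destruct (prod_choice (fun w x =>
      fval (M w) (FSup p) (fun k => e k N w) - fval (M w) p (scons x (fun k => e k N w)) < / 2 ^ i))
      as [b0 Hb0].
    { intros w. apply fval_sup_approx, inv_pow2_bounds. }
    exists b0. intros w. unfold inst. rewrite fval_seq_scons. apply Hb0.
Qed.

Lemma inf_mean_approx eps : 0 < eps -> exists b0 N, forall n, (N <= n)%nat ->
  E (fun w => Rmax (inst (fun _ => b0) n w - fval_seq (FInf p) e n w) 0) < eps.
Proof.
  apply (mean_gap_approx E HE (fun b0 => inst (fun _ => b0)) (fun _ : Prod M => fval_seq (FInf p) e)).
  - intros b0. exact (proj1 (inst_isAhat _ (cauchyM_const b0))).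
  - intros _. exact (proj1 (fval_seq_isAhat _ _ He)).
  - apply fval_seq_unif_cauchy, unif_cauchy_env_scons_const, He.
  - apply unif_cauchy_const, fval_seq_isAhat, He.
  - intros N i.
    destruct (prod_choice (fun w x =>
      fval (M w) p (scons x (fun k => e k N w)) - fval (M w) (FInf p) (fun k => e k N w) < / 2 ^ i))
      as [b0 Hb0].
    { intros w. apply fval_inf_approx, inv_pow2_bounds. }
    exists b0. intros w. unfold inst. rewrite fval_seq_scons. apply Hb0.
Qed.

Lemma Den_sup_iff Z :
  Den M E (FSup p) e Z <-> isAhat E Z /\ eqvA E Z (fval_seq (FSup p) e).
Proof.
  set (C := fval_seq (FSup p) e).
  assert (HC : isAhat E C) by apply fval_seq_isAhat, He.
  apply (hatA_extremum_iff E (cauchyM M E) (fun b => Den M E p (scons b e)) (leA E) C Z).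
  - intros X Y W. apply leA_trans, HE.
  - intros X Y. apply leA_antisym_iff, HE.
  - intros b Hb. exists (inst b). apply Den_inst, Hb.
  - intros b W Hb HW. apply (Den_inst_iff b W Hb), HW.
  - exact HC.
  - intros b W Hb HW. apply Den_inst_iff in HW as [[HWA _] HWF]; [|exact Hb].
    pose proof (proj1 (inst_isAhat b Hb)) as HFA.
    apply leA_trans with (inst b); [exact HE|exact HWA|exact HFA|exact (proj1 HC)|..].
    + apply leA_of_eqvA; assumption.
    + apply leA_of_pointwise; [exact HE|]. intros n w.
      unfold inst. rewrite fval_seq_scons. apply fval_sup_spec.
  - intros V HV HubV. apply leA_of_interpolants; [exact HE|exact (proj1 HC)|exact (proj1 HV)|].
    intros eps Heps. destruct (sup_mean_approx eps Heps) as [b0 [N1 HN1]].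
    pose proof (cauchyM_const b0) as Hb0.
    destruct (HubV _ _ Hb0 (Den_inst _ Hb0) eps Heps) as [N2 HN2].
    exists (inst (fun _ => b0)), (Nat.max N1 N2). split; [exact (proj1 (inst_isAhat _ Hb0))|].
    intros n Hn. split; [apply HN1|apply HN2]; lia.
Qed.

Lemma Den_inf_iff Z :
  Den M E (FInf p) e Z <-> isAhat E Z /\ eqvA E Z (fval_seq (FInf p) e).
Proof.
  set (C := fval_seq (FInf p) e).
  assert (HC : isAhat E C) by apply fval_seq_isAhat, He.
  apply (hatA_extremum_iff E (cauchyM M E) (fun b => Den M E p (scons b e))
           (fun X Y => leA E Y X) C Z).
  - intros X Y W HX HY HW HXY HYW. apply (leA_trans E HE W Y X); assumption.
  - intros X Y HX HY. rewrite and_comm. apply leA_antisym_iff; assumption.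
  - intros b Hb. exists (inst b). apply Den_inst, Hb.
  - intros b W Hb HW. apply (Den_inst_iff b W Hb), HW.
  - exact HC.
  - intros b W Hb HW. apply Den_inst_iff in HW as [[HWA _] HWF]; [|exact Hb].
    pose proof (proj1 (inst_isAhat b Hb)) as HFA.
    apply leA_trans with (inst b); [exact HE|exact (proj1 HC)|exact HFA|exact HWA|..].
    + apply leA_of_pointwise; [exact HE|]. intros n w.
      unfold inst. rewrite fval_seq_scons. apply fval_inf_spec.
    + apply leA_of_eqvA; [exact HE|exact HFA|exact HWA|apply eqvA_sym, HWF].
  - intros V HV HlbV. apply leA_of_interpolants; [exact HE|exact (proj1 HV)|exact (proj1 HC)|].
    intros eps Heps. destruct (inf_mean_approx eps Heps) as [b0 [N1 HN1]].
    pose proof (cauchyM_const b0) as Hb0.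
    destruct (HlbV _ _ Hb0 (Den_inst _ Hb0) eps Heps) as [N2 HN2].
    exists (inst (fun _ => b0)), (Nat.max N1 N2). split; [exact (proj1 (inst_isAhat _ Hb0))|].
    intros n Hn. split; [apply HN2|apply HN1]; lia.
Qed.

End Quantifiers.

Lemma Den_iff (phi : formula L) : forall e, cauchy_env e -> forall Z,
  Den M E phi e Z <-> isAhat E Z /\ eqvA E Z (fval_seq phi e).
Proof.
  induction phi as [P args|t1 t2| |p IH|p IH|p IHp q IHq|p IH|p IH]; intros e He Z.
  - reflexivity.
  - reflexivity.
  - reflexivity.
  - apply (hatA_unary_iff E HE (fun x => 1 - x) (Den M E p e) (fval_seq p e)).
    + intros x y. split_Rabs; lra.
    + intros x Hx. lra.
    + apply fval_seq_isAhat, He.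
    + apply IH, He.
  - apply (hatA_unary_iff E HE (fun x => x / 2) (Den M E p e) (fval_seq p e)).
    + intros x y. split_Rabs; lra.
    + intros x Hx. lra.
    + apply fval_seq_isAhat, He.
    + apply IH, He.
  - apply (hatA_binary_iff E HE (fun x y => Rmax (x - y) 0) (Den M E p e) (Den M E q e)
             (fval_seq p e) (fval_seq q e)).
    + intros x1 x2 y1 y2. lra_cases.
    + intros x y Hx Hy. lra_cases.
    + apply fval_seq_isAhat, He.
    + apply fval_seq_isAhat, He.
    + apply IHp, He.
    + apply IHq, He.
  - apply Den_sup_iff; assumption.
  - apply Den_inf_iff; assumption.
Qed.

End Randomisation.

Theorem theorem3p19 (L : Sig) (Omega : Type) (M : Omega -> Struct L)
  (E : (Omega -> R) -> R) (HE : integration_functional E) :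
  full M /\
  forall (phi : formula L) (a : nat -> Prod M),
    Den M E phi (fun k _ => a k) (fun _ => bracket M phi a).
Proof.
  split; [apply full_product|].
  intros phi a.
  assert (Ha : cauchy_env M E (fun k _ => a k)) by (intros k; apply cauchyM_const, HE).
  apply (Den_iff M E HE phi _ Ha). split.
  - exact (fval_seq_isAhat M E HE phi _ Ha).
  - apply eqvA_refl, HE.
Qed.
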